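(* Let $X,Y$ be complex Banach spaces, $U:X\to Y$ a bounded linear operator with $\|U\|\le\lambda$, $\lambda\ge1$, $1\le p<\infty$, and $Z=(\mathbb C^n,\|\cdot\|)$ a Banach space whose canonical basis is normalized $1$-unconditional. Then $$A_\lambda(B_Z,p,U)\ge\frac{\|Id:Z\to\ell_1^n\|}{n}K_\lambda(B_Z,p,U).$$
   Context: For a complete Reinhardt domain $\Omega\subset\mathbb C^n$ and a bounded holomorphic $f:\Omega\to X$, $f(z)=\sum_\alpha a_\alpha z^\alpha$, $\|f\|_{\Omega,X}=\sup_\Omega\|f(z)\|_X$. $K_\lambda(\Omega,p,U)$ is the supremum of all $r\ge0$ such that $\sup_{z\in r\Omega}\sum_\alpha\|U(a_\alpha)z^\alpha\|_Y^p\le\lambda^p\|f\|_{\Omega,X}^p$ for all bounded holomorphic $f:\Omega\to X$. $A_\lambda(\Omega,p,U)$ is the supremum of $\frac1n\sum_{i=1}^nr_i$ over $r\in\mathbb R^n_{\ge0}$ such that $\sum_\alpha\|U(a_\alpha)\|_Y^pr^{p\alpha}\le\lambda^p\|f\|_{\Omega,X}^p$ for all bounded holomorphic $f:\Omega\to X$. $B_Z$ is the open unit ball of $Z$. *)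

From HB Require Import structures.
From mathcomp Require Import all_boot all_order all_algebra.
From mathcomp Require Import all_classical all_reals all_analysis.
From mathcomp.real_closed Require Import complex.
Import Order.TTheory GRing.Theory Num.Theory.
Import numFieldNormedType.Exports.

Set Implicit Arguments.
Unset Strict Implicit.
Unset Printing Implicit Defensive.

Local Open Scope classical_set_scope.
Local Open Scope ring_scope.

Section Defs.
Variable R : realType.
Local Notation C := R[i].

(* real-valued norm of a vector in a complex normed space
   (the library norm `|x| takes values in R[i], with zero imaginary part) *)
Definition rnorm (V : normedModType C) (x : V) : R := complex.Re `|x|.

Definition cabs (c : C) : R := complex.Re `|c|.

Variable n : nat.

Definition monom (z : 'I_n -> C) (al : {ffun 'I_n -> nat}) : C :=
  \prod_(i < n) z i ^+ al i.

Definition rmonom (r : 'I_n -> R) (al : {ffun 'I_n -> nat}) : R :=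
  \prod_(i < n) r i ^+ al i.

Definition box_index (N : nat) (b : {ffun 'I_n -> 'I_N.+1}) : {ffun 'I_n -> nat} :=
  [ffun i => nat_of_ord (b i)].

Variable X : completeNormedModType C.

(* partial sum of  sum_alpha a_alpha z^alpha  over the box  alpha_i <= N *)
Definition psum (a : {ffun 'I_n -> nat} -> X) (z : 'I_n -> C) (N : nat) : X :=
  \sum_(b : {ffun 'I_n -> 'I_N.+1}) monom z (box_index b) *: a (box_index b).

Definition fval (a : {ffun 'I_n -> nat} -> X) (z : 'I_n -> C) : X :=
  limn (psum a z).

(* [a] is the family of monomial coefficients of a bounded holomorphic
   function  f : Om -> X  on the complete Reinhardt domain  Om:
   the monomial series converges absolutely at every point of Om
   and its sum is bounded on Om. *)
Definition bdd_hol (Om : set ('I_n -> C)) (a : {ffun 'I_n -> nat} -> X) : Prop :=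
  (forall z, Om z ->
     (\esum_(al in [set: {ffun 'I_n -> nat}])
        ((rnorm (a al) * cabs (monom z al))%:E) < +oo)%E) /\
  exists M : R, forall z, Om z -> rnorm (fval a z) <= M.

Definition supnorm (Om : set ('I_n -> C)) (a : {ffun 'I_n -> nat} -> X) : R :=
  sup [set rnorm (fval a z) | z in Om].

Definition dil (r : R) (Om : set ('I_n -> C)) : set ('I_n -> C) :=
  [set fun i => Complex r 0 * w i | w in Om].

Variable Y : completeNormedModType C.

Definition Kconst (Om : set ('I_n -> C)) (p lam : R) (U : X -> Y) : \bar R :=
  ereal_sup [set r%:E | r in [set r : R | 0 <= r /\
    forall a, bdd_hol Om a ->
      forall z, dil r Om z ->
        (\esum_(al in [set: {ffun 'I_n -> nat}])
           (((rnorm (U (a al)) * cabs (monom z al)) `^ p)%:E)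
         <= ((lam `^ p) * (supnorm Om a `^ p))%:E)%E]].

Definition Aconst (Om : set ('I_n -> C)) (p lam : R) (U : X -> Y) : \bar R :=
  ereal_sup [set ((n%:R)^-1 * \sum_(i < n) r i)%:E | r in
    [set r : 'I_n -> R | (forall i, 0 <= r i) /\
      forall a, bdd_hol Om a ->
        (\esum_(al in [set: {ffun 'I_n -> nat}])
           (((rnorm (U (a al))) `^ p * (rmonom r al) `^ p)%:E)
         <= ((lam `^ p) * (supnorm Om a `^ p))%:E)%E]].

End Defs.

(* A norm on C^n (finite dimensional, hence complete: a Banach space Z) *)
Definition is_norm (R : realType) (n : nat) (N : ('I_n -> R[i]) -> R) : Prop :=
  (forall z, 0 <= N z) /\
  (forall z, N z = 0 -> z = (fun _ => 0)) /\
  (forall (c : R[i]) z, N (fun i => c * z i) = cabs c * N z) /\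
  (forall z w, N (fun i => z i + w i) <= N z + N w).

Definition ebasis (R : realType) (n : nat) (j : 'I_n) : 'I_n -> R[i] :=
  fun i => if i == j then 1 else 0.

Definition normalized_1_unconditional (R : realType) (n : nat)
    (N : ('I_n -> R[i]) -> R) : Prop :=
  (forall j, N (ebasis R j) = 1) /\
  (forall (eps z : 'I_n -> R[i]), (forall i, cabs (eps i) = 1) ->
     N (fun i => eps i * z i) = N z).

Definition unit_ball (R : realType) (n : nat) (N : ('I_n -> R[i]) -> R)
  : set ('I_n -> R[i]) := [set z | N z < 1].

Definition id_to_l1 (R : realType) (n : nat) (N : ('I_n -> R[i]) -> R) : R :=
  sup [set \sum_(i < n) cabs (z i) | z in [set z | N z <= 1]].

From HB Require Import structures.
From mathcomp Require Import all_boot all_order all_algebra.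
From mathcomp Require Import all_classical all_reals all_analysis.
From mathcomp.real_closed Require Import complex.
From mathcomp Require Import ring.
Import Order.TTheory GRing.Theory Num.Theory.
Import numFieldNormedType.Exports.
Local Open Scope classical_set_scope.
Local Open Scope ring_scope.

(* If r is admissible for K and w lies in the closed unit ball of Z, then for
   0 <= t < 1 the point z = r t w lies in r B_Z, and |z^al| = rho^al for
   rho_i = |z_i|; hence rho is admissible for A, so A >= (r t / n) sum_i |w_i|.
   Letting t -> 1 and taking the supremum over w gives A >= r ||Id : Z -> l_1^n|| / n.
   Unconditionality only serves to bound |z_i| <= ||z||, so that ||Id|| is finite. *)

Set Implicit Arguments.
Unset Strict Implicit.
Unset Printing Implicit Defensive.

Section Modulus.
Variable R : realType.
Implicit Types (x y : R[i]) (r : R).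

Lemma normcE x : `|x| = (cabs x)%:C%C.
Proof. by rewrite /cabs normc_def. Qed.

Lemma cabs_ge0 x : 0 <= cabs x.
Proof. by rewrite -ler0c -normcE. Qed.

Lemma cabsM x y : cabs (x * y) = cabs x * cabs y.
Proof. by apply: complexI; rewrite rmorphM -!normcE normrM. Qed.

Lemma cabsX x k : cabs (x ^+ k) = cabs x ^+ k.
Proof. by apply: complexI; rewrite rmorphXn -!normcE normrX. Qed.

Lemma cabsN x : cabs (- x) = cabs x.
Proof. by rewrite /cabs normrN. Qed.

Lemma cabs_natr k : cabs (k%:R : R[i]) = k%:R.
Proof. by apply: complexI; rewrite -normcE normr_nat rmorph_nat. Qed.

Lemma cabs_real r : cabs (Complex r 0) = `|r|.
Proof. by rewrite /cabs normc_def /= expr0n /= addr0 sqrtr_sqr. Qed.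

Lemma cabs_prod n (f : 'I_n -> R[i]) :
  cabs (\prod_(i < n) f i) = \prod_(i < n) cabs (f i).
Proof. exact: (big_morph _ cabsM (cabs_natr 1)). Qed.

Lemma rnorm_ge0 (V : normedModType R[i]) (v : V) : 0 <= rnorm v.
Proof. by have := normr_ge0 v; rewrite lecE => /andP[]. Qed.

End Modulus.

Section Admissible.
Variables (R : realType) (n : nat) (X Y : completeNormedModType R[i]).
Variables (U : X -> Y) (Om : set ('I_n -> R[i])) (p lam : R).

Definition K_admissible (r : R) : Prop :=
  0 <= r /\ forall a, bdd_hol Om a -> forall z, dil r Om z ->
    (\esum_(al in [set: {ffun 'I_n -> nat}])
       (((rnorm (U (a al)) * cabs (monom z al)) `^ p)%:E)
     <= ((lam `^ p) * (supnorm Om a `^ p))%:E)%E.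

Definition A_admissible (rho : 'I_n -> R) : Prop :=
  (forall i, 0 <= rho i) /\ forall a, bdd_hol Om a ->
    (\esum_(al in [set: {ffun 'I_n -> nat}])
       (((rnorm (U (a al))) `^ p * (rmonom rho al) `^ p)%:E)
     <= ((lam `^ p) * (supnorm Om a `^ p))%:E)%E.

Lemma cabs_monom (z : 'I_n -> R[i]) al :
  cabs (monom z al) = rmonom (fun i => cabs (z i)) al.
Proof. by rewrite /monom cabs_prod; apply: eq_bigr => i _; rewrite cabsX. Qed.

Lemma A_admissible_cabs_dil r z :
  K_admissible r -> dil r Om z -> A_admissible (fun i => cabs (z i)).
Proof.
move=> [_ Kr] z_dil; split=> [i|a a_hol]; first exact: cabs_ge0.
rewrite (eq_esum (b := fun al => ((rnorm (U (a al)) * cabs (monom z al)) `^ p)%:E)).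
  exact: Kr.
by move=> al _; rewrite powRM ?rnorm_ge0 ?cabs_ge0 // cabs_monom.
Qed.

Lemma Aconst_ge_mean_cabs r z : K_admissible r -> dil r Om z ->
  ((n%:R^-1 * \sum_(i < n) cabs (z i))%:E <= Aconst Om p lam U)%E.
Proof.
move=> Kr z_dil; apply: ereal_sup_ubound.
by exists (fun i => cabs (z i)) => //; exact: A_admissible_cabs_dil Kr z_dil.
Qed.

End Admissible.

Section UnitBall.
Variables (R : realType) (n : nat) (N : ('I_n -> R[i]) -> R).
Hypotheses (N_norm : is_norm N) (N_unc : normalized_1_unconditional N).

Local Notation l1_ball_image :=
  [set \sum_(i < n) cabs (z i) | z in [set z | N z <= 1]].

Lemma cabs_le_norm z i : cabs (z i) <= N z.
Proof.
have [_ [_ [NZ ND]]] := N_norm; have [Ne Nu] := N_unc.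
pose eps j : R[i] := if j == i then 1 else -1.
have eps_unit j : cabs (eps j) = 1.
  by rewrite /eps; case: eqP; rewrite ?cabsN (cabs_natr _ 1).
(* z + eps z doubles the i-th coordinate and kills the others *)
have := ND z (fun j => eps j * z j); rewrite Nu //.
have -> : (fun j => z j + eps j * z j) = (fun j => (2 * z i) * ebasis R i j).
  apply: funext => j; rewrite /eps /ebasis; case: eqP => [->|_].
    by rewrite mulr1 mul1r mulr2n mulrDl mul1r.
  by rewrite mulr0 mulN1r subrr.
by rewrite NZ Ne mulr1 cabsM (cabs_natr _ 2) mulr2n mulrDl mul1r -mulr2n ler_pMn2r.
Qed.

Lemma sum_cabs_le z : N z <= 1 -> \sum_(i < n) cabs (z i) <= n%:R.
Proof.
move=> z1; rewrite -[n in n%:R]card_ord -sumr_const.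
by apply: ler_sum => i _; apply: le_trans (cabs_le_norm z i) z1.
Qed.

Lemma l1_ball_image_ebasis (j : 'I_n) : l1_ball_image 1.
Proof.
exists (ebasis R j); first by rewrite /= (proj1 N_unc).
rewrite (bigD1 j) //= big1 => [|i /negbTE]; rewrite /ebasis ?eqxx.
  by rewrite addr0 (cabs_natr _ 1).
by move=> ->; rewrite (cabs_natr _ 0).
Qed.

Lemma has_sup_l1_ball_image : (0 < n)%N -> has_sup l1_ball_image.
Proof.
move=> n_gt0; split; first by exists 1; exact: l1_ball_image_ebasis (Ordinal n_gt0).
by exists n%:R => _ [z z1 <-]; exact: sum_cabs_le.
Qed.

Lemma id_to_l1_ge1 : (0 < n)%N -> 1 <= id_to_l1 N.
Proof.
move=> n_gt0; have [_ ub] := has_sup_l1_ball_image n_gt0.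
exact: ub_le_sup ub _ (l1_ball_image_ebasis (Ordinal n_gt0)).
Qed.

Lemma dil_unit_ball r t w : 0 <= r -> 0 <= t -> t < 1 -> N w <= 1 ->
  dil r (unit_ball N) (fun i => Complex r 0 * (Complex t 0 * w i)).
Proof.
move=> r_ge0 t_ge0 t_lt1 w1; exists (fun i => Complex t 0 * w i) => //.
have [_ [_ [NZ _]]] := N_norm.
rewrite /unit_ball /= NZ cabs_real ger0_norm //.
by apply: le_lt_trans t_lt1; rewrite -[leRHS]mulr1 ler_wpM2l.
Qed.

End UnitBall.

Lemma Aconst_ge_id_to_l1 (R : realType) (X Y : completeNormedModType R[i])
    (U : X -> Y) (p lam : R) (n : nat) (N : ('I_n -> R[i]) -> R) (r : R) :
  (0 < n)%N -> is_norm N -> normalized_1_unconditional N ->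
  K_admissible U (unit_ball N) p lam r ->
  ((r / n%:R * id_to_l1 N)%:E <= Aconst (unit_ball N) p lam U)%E.
Proof.
move=> n_gt0 N_norm N_unc Kr.
have [ball_n0 ball_ub] := has_sup_l1_ball_image N_norm N_unc n_gt0.
rewrite EFinM /id_to_l1 -ereal_sup_EFin // -ereal_supZl; first last.
- by rewrite divr_ge0 ?ler0n // (proj1 Kr).
- by apply/set0P; case: ball_n0 => s Ss; exists s%:E, s.
apply: ge_ereal_sup => _ [_ [_ [w w1 <-] <-] <-].
apply/lee_mul01Pr => [|t /andP[t_gt0 t_lt1]].
  rewrite -EFinM lee_fin !mulr_ge0 ?invr_ge0 ?ler0n ?(proj1 Kr) //.
  by apply: sumr_ge0 => i _; exact: cabs_ge0.
have := Aconst_ge_mean_cabs Kr (dil_unit_ball N_norm (proj1 Kr) (ltW t_gt0) t_lt1 w1).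
suff -> : n%:R^-1 * \sum_(i < n) cabs (Complex r 0 * (Complex t 0 * w i))
          = t * (r / n%:R * \sum_(i < n) cabs (w i)) by rewrite -!EFinM.
under eq_bigr do rewrite !cabsM !cabs_real (ger0_norm (proj1 Kr)) (gtr0_norm t_gt0).
by rewrite -!mulr_sumr; ring.
Qed.

Theorem mainTheorem17 (R : realType) (X Y : completeNormedModType R[i])
  (U : {linear X -> Y}) (lam p : R) (n : nat) (N : ('I_n -> R[i]) -> R) :
  1 <= lam ->
  (forall x : X, rnorm (U x) <= lam * rnorm x) ->
  1 <= p ->
  (0 < n)%N ->
  is_norm N ->
  normalized_1_unconditional N ->
  (((id_to_l1 N / n%:R)%:E * Kconst (unit_ball N) p lam U)
     <= Aconst (unit_ball N) p lam U)%E.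
Proof.
move=> _ _ _ n_gt0 N_norm N_unc.
have c_gt0 : 0 < id_to_l1 N / n%:R.
  by rewrite divr_gt0 ?ltr0n // (lt_le_trans ltr01 (id_to_l1_ge1 N_norm N_unc n_gt0)).
rewrite /Kconst -ereal_sup_pZl //.
apply: ge_ereal_sup => _ [_ [r Kr <-] <-].
rewrite -EFinM mulrC mulrCA mulrC.
exact: Aconst_ge_id_to_l1.
Qed.
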